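(* Let $X$ and $Y$ be Banach spaces and $T\in B(X)$, $S\in B(Y)$ operators with $I_T=I_S$. Then there exist constants $M>0$ and $m\in\mathbb N$ such that for every $s$-function $s$, $$s_{m(n-1)+j}(T)\le M s_n(S)\quad\text{and}\quad s_{m(n-1)+j}(S)\le M s_n(T)$$ for all $n\in\mathbb N$ and all $j\in\{0,\ldots,m-1\}$ with $m(n-1)+j\ge 1$.
   Context: All Banach spaces are complex; $B(X,Y)$ denotes bounded linear operators. For $T\in B(X,Y)$ and Banach spaces $Z_1,Z_2$, $I_T(Z_1,Z_2)=\bigcup_{n\in\mathbb N}\{\sum_{j=1}^n R_jTR_j' : R_j\in B(Y,Z_2),\ R_j'\in B(Z_1,X)\}$ and $I_T=\bigcup_{Z_1,Z_2}I_T(Z_1,Z_2)$; $I_T=I_S$ means $I_T(Z_1,Z_2)=I_S(Z_1,Z_2)$ for all $Z_1,Z_2$. An $s$-function is a rule assigning to every operator $T\in B(X,Y)$ (for all Banach spaces $X,Y$) a sequence $(s_n(T))_{n\ge1}$ such that: (1) $\|T\|=s_1(T)\ge s_2(T)\ge\cdots\ge0$; (2) $s_{n+m-1}(S+T)\le s_n(S)+s_m(T)$ for all $m,n$ and $S,T\in B(X,Y)$; (3) $s_n(STR)\le\|S\|\|R\|s_n(T)$ for $T\in B(X,Y)$, $S\in B(Y,Z_2)$, $R\in B(Z_1,X)$; (4) $s_n(T)=0$ if $\mathrm{rank}\,T<n$; (5) $s_n(\mathrm{id}_{\ell^2_n})=1$, where $\ell^2_n$ is $\mathbb C^n$ with the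 Euclidean norm. *)

From Stdlib Require Import Reals List.
Import ListNotations.
Open Scope R_scope.

Record Cx := mkCx { re : R; im : R }.
Definition Cmod (z : Cx) : R := sqrt (re z * re z + im z * im z).
Definition Cadd (a b : Cx) : Cx := mkCx (re a + re b) (im a + im b).
Definition Cmul (a b : Cx) : Cx :=
  mkCx (re a * re b - im a * im b) (re a * im b + im a * re b).
Definition C1 : Cx := mkCx 1 0.

Record Banach := {
  carrier :> Type;
  vzero : carrier;
  vadd : carrier -> carrier -> carrier;
  vopp : carrier -> carrier;
  vscal : Cx -> carrier -> carrier;
  vnorm : carrier -> R;
  vadd_assoc : forall x y z, vadd x (vadd y z) = vadd (vadd x y) z;
  vadd_comm : forall x y, vadd x y = vadd y x;
  vadd_0 : forall x, vadd x vzero = x;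
  vadd_opp : forall x, vadd x (vopp x) = vzero;
  vscal_1 : forall x, vscal C1 x = x;
  vscal_assoc : forall a b x, vscal a (vscal b x) = vscal (Cmul a b) x;
  vscal_distr_v : forall a x y, vscal a (vadd x y) = vadd (vscal a x) (vscal a y);
  vscal_distr_s : forall a b x, vscal (Cadd a b) x = vadd (vscal a x) (vscal b x);
  vnorm_nonneg : forall x, 0 <= vnorm x;
  vnorm_eq0 : forall x, vnorm x = 0 -> x = vzero;
  vnorm_scal : forall a x, vnorm (vscal a x) = Cmod a * vnorm x;
  vnorm_triangle : forall x y, vnorm (vadd x y) <= vnorm x + vnorm y;
  vcomplete : forall u : nat -> carrier,
    (forall eps, 0 < eps -> exists N, forall p q, (N <= p)%nat -> (N <= q)%nat ->
        vnorm (vadd (u p) (vopp (u q))) < eps) ->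
    exists l, forall eps, 0 < eps -> exists N, forall p, (N <= p)%nat ->
        vnorm (vadd (u p) (vopp l)) < eps
}.

Arguments vzero {b} : rename.
Arguments vadd {b} : rename.
Arguments vopp {b} : rename.
Arguments vscal {b} : rename.
Arguments vnorm {b} : rename.

Record BOp (X Y : Banach) := {
  app :> X -> Y;
  app_add : forall x y, app (vadd x y) = vadd (app x) (app y);
  app_scal : forall a x, app (vscal a x) = vscal a (app x);
  app_bounded : exists c, forall x, vnorm (app x) <= c * vnorm x
}.
Arguments app {X Y}.

Definition is_opnorm {X Y : Banach} (T : BOp X Y) (r : R) : Prop :=
  is_lub (fun t => exists x : X, vnorm x <= 1 /\ t = vnorm (T x)) r.

Fixpoint lincomb {Y : Banach} (cs : list Cx) (ys : list Y) : Y :=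
  match cs, ys with
  | c :: cs', y :: ys' => vadd (vscal c y) (lincomb cs' ys')
  | _, _ => vzero
  end.

Definition rank_lt {X Y : Banach} (T : BOp X Y) (n : nat) : Prop :=
  exists ys : list Y, (length ys < n)%nat /\
    forall x : X, exists cs : list Cx, length cs = length ys /\ T x = lincomb cs ys.

(** E is (isometrically) l^2_n : it has a basis e_1..e_n with
    || sum c_i e_i || = sqrt (sum |c_i|^2) *)
Definition sumsq (cs : list Cx) : R := fold_right (fun c acc => Cmod c * Cmod c + acc) 0 cs.

Definition is_l2n (E : Banach) (n : nat) : Prop :=
  exists es : list E, length es = n /\
    (forall x : E, exists cs, length cs = n /\ x = lincomb cs es) /\
    (forall cs, length cs = n -> vnorm (lincomb cs es) = sqrt (sumsq cs)).

Definition in_IT {X Y : Banach} (T : BOp X Y) {Z1 Z2 : Banach} (U : BOp Z1 Z2) : Prop :=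
  exists l : list (BOp Y Z2 * BOp Z1 X), (1 <= length l)%nat /\
    forall z : Z1, U z = fold_right (fun (p : BOp Y Z2 * BOp Z1 X) (acc : Z2) => vadd (app (fst p) (app T (app (snd p) z))) acc) vzero l.

Definition same_ideal {X Y X' Y' : Banach} (T : BOp X Y) (S : BOp X' Y') : Prop :=
  forall (Z1 Z2 : Banach) (U : BOp Z1 Z2), in_IT T U <-> in_IT S U.

(** * s-functions (indices n >= 1 are the meaningful ones) *)
Record sfunction := {
  sf :> forall (X Y : Banach), BOp X Y -> nat -> R;
  sf_norm : forall X Y (T : BOp X Y), is_opnorm T (sf X Y T 1);
  sf_mono : forall X Y (T : BOp X Y) n, (1 <= n)%nat -> sf X Y T (S n) <= sf X Y T n;
  sf_nonneg : forall X Y (T : BOp X Y) n, (1 <= n)%nat -> 0 <= sf X Y T n;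
  sf_add : forall X Y (A B U : BOp X Y) n m, (1 <= n)%nat -> (1 <= m)%nat ->
    (forall x, U x = vadd (A x) (B x)) ->
    sf X Y U (n + m - 1) <= sf X Y A n + sf X Y B m;
  sf_ideal : forall (X Y Z1 Z2 : Banach) (T : BOp X Y) (A : BOp Y Z2) (B : BOp Z1 X)
    (U : BOp Z1 Z2) n nA nB, (1 <= n)%nat ->
    (forall z, U z = A (T (B z))) -> is_opnorm A nA -> is_opnorm B nB ->
    sf Z1 Z2 U n <= nA * nB * sf X Y T n;
  sf_rank : forall X Y (T : BOp X Y) n, (1 <= n)%nat -> rank_lt T n -> sf X Y T n = 0;
  sf_l2 : forall (E : Banach) (I : BOp E E) n, (1 <= n)%nat -> is_l2n E n ->
    (forall x, I x = x) -> sf E E I n = 1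
}.

(* Since [S ∈ I_T], write [S = Σ_{i<k} A_i T B_i].  Iterating the additivity
   axiom [s_{n+m-1}(U+V) ≤ s_n(U) + s_m(V)] together with the ideal property gives
   [s_{k(n-1)+1}(S) ≤ (Σ_i ‖A_i‖‖B_i‖) s_n(T)] for every s-function.  The same
   holds with T and S exchanged, and monotonicity of [s] absorbs the shift [j]
   once [m] exceeds both lengths. *)
From Stdlib Require Import Reals List.
From Stdlib Require Import Lra Lia Psatz.
Open Scope R_scope.

Lemma vadd_0l (B : Banach) (x : B) : vadd vzero x = x.
Proof. rewrite vadd_comm; apply vadd_0. Qed.

Lemma vadd_reg_l (B : Banach) (x y z : B) : vadd x y = vadd x z -> y = z.
Proof.
  intro Hyz.
  assert (Hcancel : forall w, vadd (vopp x) (vadd x w) = w).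
  { intro w. rewrite vadd_assoc, (vadd_comm _ (vopp x)), vadd_opp, vadd_0l.
    reflexivity. }
  rewrite <- (Hcancel y), <- (Hcancel z), Hyz. reflexivity.
Qed.

Lemma vscal_v0 (B : Banach) (a : Cx) : vscal a (@vzero B) = vzero.
Proof.
  apply (vadd_reg_l B (vscal a vzero)).
  rewrite vadd_0, <- vscal_distr_v, vadd_0. reflexivity.
Qed.

Lemma vnorm_0 (B : Banach) : vnorm (@vzero B) = 0.
Proof.
  rewrite <- (vscal_v0 B (mkCx 0 0)), vnorm_scal. unfold Cmod; simpl.
  replace (0 * 0 + 0 * 0) with 0 by ring. rewrite sqrt_0; ring.
Qed.

Lemma vaddACA (B : Banach) (a b c d : B) :
  vadd (vadd a b) (vadd c d) = vadd (vadd a c) (vadd b d).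
Proof.
  rewrite <- !vadd_assoc. f_equal.
  rewrite !vadd_assoc, (vadd_comm _ b c). reflexivity.
Qed.

Lemma app_bounded_nonneg {X Y : Banach} (A : BOp X Y) :
  exists c, 0 <= c /\ forall x, vnorm (A x) <= c * vnorm x.
Proof.
  destruct (app_bounded _ _ A) as [c Hc]. exists (Rabs c).
  split; [apply Rabs_pos |]. intro x.
  apply Rle_trans with (c * vnorm x); [apply Hc |].
  apply Rmult_le_compat_r; [apply vnorm_nonneg | apply Rle_abs].
Qed.

Definition comp3op {X Y Z1 Z2 : Banach}
  (A : BOp Y Z2) (T : BOp X Y) (B : BOp Z1 X) : BOp Z1 Z2.
Proof.
  refine (Build_BOp _ _ (fun z => A (T (B z))) _ _ _).
  - intros; rewrite !app_add; reflexivity.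
  - intros; rewrite !app_scal; reflexivity.
  - destruct (app_bounded_nonneg A) as [ca [Hca HA]].
    destruct (app_bounded_nonneg T) as [ct [Hct HT]].
    destruct (app_bounded_nonneg B) as [cb [Hcb HB]].
    exists (ca * ct * cb). intro x.
    apply Rle_trans with (ca * vnorm (T (B x))); [apply HA |].
    apply Rle_trans with (ca * (ct * vnorm (B x))); [apply Rmult_le_compat_l; auto |].
    rewrite Rmult_assoc, Rmult_assoc.
    apply Rmult_le_compat_l; [exact Hca |]. apply Rmult_le_compat_l; auto.
Defined.

Definition addop {Z1 Z2 : Banach} (U V : BOp Z1 Z2) : BOp Z1 Z2.
Proof.
  refine (Build_BOp _ _ (fun z => vadd (U z) (V z)) _ _ _).
  - intros; rewrite !app_add; apply vaddACA.
  - intros; rewrite !app_scal, vscal_distr_v; reflexivity.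
  - destruct (app_bounded_nonneg U) as [cu [_ HU]].
    destruct (app_bounded_nonneg V) as [cv [_ HV]].
    exists (cu + cv). intro x.
    pose proof (vnorm_triangle _ (U x) (V x)).
    specialize (HU x); specialize (HV x). lra.
Defined.

Definition zeroop {Z1 Z2 : Banach} : BOp Z1 Z2.
Proof.
  refine (Build_BOp _ _ (fun _ => @vzero Z2) _ _ _).
  - intros; rewrite vadd_0; reflexivity.
  - intros; rewrite vscal_v0; reflexivity.
  - exists 0. intro x. rewrite vnorm_0, Rmult_0_l. lra.
Defined.

Definition idop {Z : Banach} : BOp Z Z.
Proof.
  refine (Build_BOp _ _ (fun z => z) _ _ _); [reflexivity | reflexivity |].
  exists 1. intro x. lra.
Defined.

Lemma in_IT_refl {X Y : Banach} (T : BOp X Y) : in_IT T T.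
Proof.
  exists ((idop, idop) :: nil). split; [simpl; lia |].
  intro z. simpl. rewrite vadd_0. reflexivity.
Qed.

Lemma opnorm_exists {X Y : Banach} (A : BOp X Y) : {r | is_opnorm A r /\ 0 <= r}.
Proof.
  assert (Hunit : exists x : X, vnorm x <= 1 /\ vnorm (A vzero) = vnorm (A x)).
  { exists vzero. rewrite vnorm_0. split; [lra | reflexivity]. }
  destruct (completeness (fun t => exists x : X, vnorm x <= 1 /\ t = vnorm (A x)))
    as [r Hr].
  - destruct (app_bounded_nonneg A) as [c [Hc HA]]. exists c.
    intros t [x [Hx ->]]. specialize (HA x). nra.
  - exists (vnorm (A vzero)). exact Hunit.
  - exists r. split; [exact Hr |].
    apply Rle_trans with (vnorm (A vzero)); [apply vnorm_nonneg |].
    apply (proj1 Hr). exact Hunit.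
Qed.

Definition opnorm {X Y : Banach} (A : BOp X Y) : R := proj1_sig (opnorm_exists A).

Lemma opnormP {X Y : Banach} (A : BOp X Y) : is_opnorm A (opnorm A).
Proof. exact (proj1 (proj2_sig (opnorm_exists A))). Qed.

Lemma opnorm_ge0 {X Y : Banach} (A : BOp X Y) : 0 <= opnorm A.
Proof. exact (proj2 (proj2_sig (opnorm_exists A))). Qed.

Section Factorisation.
Variables (X Y Z1 Z2 : Banach) (T : BOp X Y).

Fixpoint factor_sum (l : list (BOp Y Z2 * BOp Z1 X)) : BOp Z1 Z2 :=
  match l with
  | nil => zeroop
  | p :: l' => addop (comp3op (fst p) T (snd p)) (factor_sum l')
  end.

Lemma factor_sumE (l : list (BOp Y Z2 * BOp Z1 X)) z :
  factor_sum l z =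
  fold_right (fun (p : BOp Y Z2 * BOp Z1 X) (acc : Z2) =>
    vadd (fst p (T (snd p z))) acc) vzero l.
Proof. induction l as [| p l IH]; simpl; [reflexivity |]. rewrite IH. reflexivity. Qed.

Definition factor_weight (l : list (BOp Y Z2 * BOp Z1 X)) : R :=
  fold_right (fun p acc => opnorm (fst p) * opnorm (snd p) + acc) 0 l.

Lemma factor_weight_ge0 (l : list (BOp Y Z2 * BOp Z1 X)) : 0 <= factor_weight l.
Proof.
  induction l as [| p l IH]; simpl; [lra |].
  pose proof (opnorm_ge0 (fst p)). pose proof (opnorm_ge0 (snd p)).
  fold (factor_weight l). nra.
Qed.

Lemma sf_comp3_le (s : sfunction) (A : BOp Y Z2) (B : BOp Z1 X) (U : BOp Z1 Z2) n :
  (1 <= n)%nat -> (forall z, U z = A (T (B z))) ->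
  s Z1 Z2 U n <= opnorm A * opnorm B * s X Y T n.
Proof. intros Hn HU. apply (sf_ideal s _ _ _ _ T A B); auto using opnormP. Qed.

Lemma sf_factor_sum_le (s : sfunction) (l : list (BOp Y Z2 * BOp Z1 X)) :
  forall (U : BOp Z1 Z2) n, (1 <= n)%nat -> (1 <= length l)%nat ->
  (forall z, U z = factor_sum l z) ->
  s Z1 Z2 U (length l * (n - 1) + 1)%nat <= factor_weight l * s X Y T n.
Proof.
  induction l as [| p l IH]; intros U n Hn Hl HU; simpl in Hl; [lia |].
  simpl factor_weight; fold (factor_weight l).
  destruct l as [| p' l''].
  - replace (length (p :: nil) * (n - 1) + 1)%nat with n by (simpl; lia).
    rewrite Rplus_0_r. apply sf_comp3_le; [exact Hn |].
    intro z. rewrite HU. simpl. apply vadd_0.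
  - set (l := p' :: l'') in *.
    replace (length (p :: l) * (n - 1) + 1)%nat
      with (n + (length l * (n - 1) + 1) - 1)%nat
      by (simpl length; destruct n; [lia |]; simpl; lia).
    rewrite Rmult_plus_distr_r.
    apply Rle_trans with (s Z1 Z2 (comp3op (fst p) T (snd p)) n +
                          s Z1 Z2 (factor_sum l) (length l * (n - 1) + 1)%nat).
    + apply sf_add; [exact Hn | apply Nat.le_add_l | intro z; rewrite HU; reflexivity].
    + apply Rplus_le_compat.
      * apply sf_comp3_le; [exact Hn | reflexivity].
      * apply IH; [exact Hn | simpl; lia | reflexivity].
Qed.

End Factorisation.

Arguments factor_weight {X Y Z1 Z2}.

Lemma sf_antimono (s : sfunction) {X Y : Banach} (T : BOp X Y) a b :
  (1 <= a)%nat -> (a <= b)%nat -> s X Y T b <= s X Y T a.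
Proof.
  intros Ha Hab. induction Hab as [| b Hab IH]; [lra |].
  apply Rle_trans with (s X Y T b); [apply sf_mono; lia | exact IH].
Qed.

Lemma sf_in_IT_le {X Y Z1 Z2 : Banach} (T : BOp X Y) (U : BOp Z1 Z2) :
  in_IT T U -> exists K k, 0 <= K /\
    forall (s : sfunction) (M : R) (m n j : nat), K <= M -> (k < m)%nat ->
      (1 <= n)%nat -> (1 <= m * (n - 1) + j)%nat ->
      s Z1 Z2 U (m * (n - 1) + j)%nat <= M * s X Y T n.
Proof.
  intros [l [Hl HU]]. exists (factor_weight l), (length l).
  split; [apply factor_weight_ge0 |].
  intros s M m n j HKM Hkm Hn Hidx.
  assert (Hshift : (length l * (n - 1) + 1 <= m * (n - 1) + j)%nat).
  { destruct (Nat.eq_dec n 1) as [-> | Hn1]; [simpl in *; lia |].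
    assert (length l * (n - 1) < m * (n - 1))%nat
      by (apply Nat.mul_lt_mono_pos_r; lia).
    lia. }
  pose proof (sf_nonneg s X Y T n Hn).
  apply Rle_trans with (s Z1 Z2 U (length l * (n - 1) + 1)%nat);
    [apply sf_antimono; [apply Nat.le_add_l | exact Hshift] |].
  apply Rle_trans with (factor_weight l * s X Y T n); [| nra].
  apply sf_factor_sum_le; [exact Hn | exact Hl |].
  intro z. rewrite HU, factor_sumE. reflexivity.
Qed.

Theorem proposition3p2 (X Y : Banach) (T : BOp X X) (S : BOp Y Y) :
  same_ideal T S ->
  exists (M : R) (m : nat), 0 < M /\ (1 <= m)%nat /\
    forall (s : sfunction) (n j : nat), (1 <= n)%nat -> (j < m)%nat ->
      (1 <= m * (n - 1) + j)%nat ->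
      s X X T ((m * (n - 1) + j)%nat) <= M * s Y Y S n /\
      s Y Y S ((m * (n - 1) + j)%nat) <= M * s X X T n.
Proof.
  intro Hideal.
  destruct (sf_in_IT_le T S (proj2 (Hideal Y Y S) (in_IT_refl S)))
    as [K1 [k1 [HK1 HS]]].
  destruct (sf_in_IT_le S T (proj1 (Hideal X X T) (in_IT_refl T)))
    as [K2 [k2 [HK2 HT]]].
  exists (K1 + K2 + 1), (k1 + k2 + 1)%nat.
  split; [lra |]. split; [lia |].
  intros s n j Hn _ Hidx. split.
  - apply HT; [lra | lia | exact Hn | exact Hidx].
  - apply HS; [lra | lia | exact Hn | exact Hidx].
Qed.
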